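(* Let $k$ be an algebraically closed field of characteristic zero, $A=k[u,v][x,y,z]$, $w=xv-yu$, and let $\partial=u\frac{\partial}{\partial x}+v\frac{\partial}{\partial y}+(1+w)\frac{\partial}{\partial z}$ (a locally nilpotent $k[u,v]$-derivation of $A$). Then the Rees algebra $R(A,\partial)$ is isomorphic to the quotient of the polynomial ring $k[u,v,x,y,z,w,c_1,c_2,\upsilon]$, graded by the weights $\omega_u=\omega_v=\omega_w=\omega_{c_1}=\omega_{c_2}=0$ and $\omega_x=\omega_y=\omega_z=\omega_\upsilon=1$, by the homogeneous ideal $I$ generated by $vc_1-uc_2-w(w+1)$, $c_2x-c_1y+wz$, $w\upsilon+uy-vx$, $c_2\upsilon+vz-(1+w)y$ and $c_1\upsilon+uz-(1+w)x$.
   Context: For a $k$-algebra $A$ with locally nilpotent derivation $\partial$, the Rees algebra is $R(A,\partial)=\bigoplus_{n\geq0}\ker(\partial^{n+1})\upsilon^n\subseteq A[\upsilon]$, graded by $n$. *)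

From HB Require Import structures.
From mathcomp Require Import all_boot all_order all_algebra.
From mathcomp.multinomials Require Import mpoly.
Set Implicit Arguments. Unset Strict Implicit. Unset Printing Implicit Defensive.
Import Order.TTheory GRing.Theory.
Local Open Scope ring_scope.

(* A = k[u,v][x,y,z] = {mpoly k[5]} with variables
   u = 'X_0, v = 'X_1, x = 'X_2, y = 'X_3, z = 'X_4. *)
Section Defs.
Variable k : fieldType.

Definition Avar (i : nat) : {mpoly k[5]} := 'X_(@inord 4 i).
Definition Au := Avar 0. Definition Av := Avar 1.
Definition Ax := Avar 2. Definition Ay := Avar 3. Definition Az := Avar 4.

Definition Aw : {mpoly k[5]} := Ax * Av - Ay * Au.

Definition Dder (p : {mpoly k[5]}) : {mpoly k[5]} :=
  Au * mderiv (@inord 4 2) p + Av * mderiv (@inord 4 3) p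
  + (1 + Aw) * mderiv (@inord 4 4) p.

(* The Rees algebra R(A, D) = (+)_n ker(D^(n+1)) ups^n inside A[ups],
   with A[ups] = {poly {mpoly k[5]}} (the polynomial variable is ups). *)
Definition in_rees (P : {poly {mpoly k[5]}}) : Prop :=
  forall n : nat, iter n.+1 Dder (P`_n) = 0.

(* S = k[u,v,x,y,z,w,c1,c2,ups] = {mpoly k[9]} with variables
   u='X_0 v='X_1 x='X_2 y='X_3 z='X_4 w='X_5 c1='X_6 c2='X_7 ups='X_8. *)
Definition Svar (i : nat) : {mpoly k[9]} := 'X_(@inord 8 i).
Definition Su := Svar 0. Definition Sv := Svar 1. Definition Sx := Svar 2.
Definition Sy := Svar 3. Definition Sz := Svar 4. Definition Sw := Svar 5.
Definition Sc1 := Svar 6. Definition Sc2 := Svar 7. Definition Sups := Svar 8.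

Definition sweight (m : 'X_{1..9}) : nat :=
  (m (@inord 8 2) + m (@inord 8 3) + m (@inord 8 4) + m (@inord 8 8))%N.

Definition Igen (i : 'I_5) : {mpoly k[9]} :=
  match val i with
  | 0 => Sv * Sc1 - Su * Sc2 - Sw * (Sw + 1)
  | 1 => Sc2 * Sx - Sc1 * Sy + Sw * Sz
  | 2 => Sw * Sups + Su * Sy - Sv * Sx
  | 3 => Sc2 * Sups + Sv * Sz - (1 + Sw) * Sy
  | _ => Sc1 * Sups + Su * Sz - (1 + Sw) * Sx
  end.

Definition in_I (p : {mpoly k[9]}) : Prop :=
  exists q : 'I_5 -> {mpoly k[9]}, p = \sum_(i < 5) q i * Igen i.

End Defs.

From HB Require Import structures.
From mathcomp Require Import all_boot all_order all_algebra.
From mathcomp.multinomials Require Import mpoly.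
From mathcomp Require Import ring zify.
Set Implicit Arguments. Unset Strict Implicit. Unset Printing Implicit Defensive.
Import GRing.Theory.
Local Open Scope ring_scope.

(* The map [rees_map] sends u, v, w, c1, c2 to u, v, w = xv - yu,
   c1 = (1 + w)x - uz, c2 = (1 + w)y - vz, which all lie in ker D, and x, y, z,
   ups to x ups, y ups, z ups, ups; it kills the five generators of I.  A monomial
   of degree d in x, y, z is sent to a coefficient E with D^d E = d! F, where F is
   a product of elements of ker D, so the image lies in the Rees algebra.
   Conversely, the generators rewrite every monomial, lowering a weight, into a
   combination of standard monomials (those divisible by none of w^2, zw, vx, vz,
   uz).  For standard monomials of equal weight and equal d the products F are
   linearly independent, because for the grading deg u = deg z = 1,
   deg v = deg y = 2, deg x = 3 their leading forms are distinct monomials.  In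
   characteristic zero, if D^n kills a combination of standard monomials of one
   weight, all its coefficients with d >= n therefore vanish: for n = 0 this
   identifies the kernel with I, and for n = N + 1 it shows that a preimage of
   f ups^M can be lowered to a preimage of f ups^N. *)

Lemma exists_max_seq (T : eqType) (f : T -> nat) (s : seq T) x :
  x \in s -> exists2 y, y \in s & {in s, forall z, (f z <= f y)%N}.
Proof.
elim: s x => // a s IH x _; case: s IH => [_ | b s IH].
  by exists a => [|z]; rewrite ?mem_head // mem_seq1 => /eqP ->.
have [y ys ymax] := IH b (mem_head _ _).
have [le_ay | lt_ya] := leqP (f a) (f y).
  by exists y => [|z]; rewrite in_cons ?ys ?orbT // => /orP [/eqP -> | /ymax].
exists a => [|z]; first exact: mem_head.
by rewrite in_cons => /orP [/eqP -> // | /ymax /leq_trans]; apply; apply: ltnW.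
Qed.

Lemma big_ord_iota (R : Type) (idx : R) (op : R -> R -> R) n (F : 'I_n.+1 -> R) :
  \big[op/idx]_(i < n.+1) F i = \big[op/idx]_(i <- iota 0 n.+1) F (inord i).
Proof.
rewrite -[iota 0 n.+1]/(index_iota 0 n.+1) big_mkord.
by apply: eq_bigr => i _; rewrite inord_val.
Qed.

Lemma eq_inord n i j : (i <= n)%N -> (j <= n)%N -> (@inord n i == inord j) = (i == j).
Proof. by move=> le_in le_jn; rewrite -val_eqE /= !inordK. Qed.

Lemma mderivX1 n (R : nzRingType) (i j : 'I_n) :
  mderiv i ('X_j : {mpoly R[n]}) = (j == i)%:R.
Proof.
rewrite mderivX mnm1E; have [<-|_] := eqVneq j i; last by rewrite scale0r.
by rewrite -{1}[U_(j)%MM]add0m addmK mpolyX0 scale1r.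
Qed.

Lemma lepm_UU n (a b : 'I_n) (m : 'X_{1..n}) :
  ((a == b).+1 <= m a)%N -> (0 < m b)%N -> (U_(a) + U_(b) <= m)%MM.
Proof.
move=> le_a lt_b; apply/mnm_lepP => i; rewrite mnmDE !mnm1E.
have [<-|_] := eqVneq a i; last by case: eqP => [<-|].
by rewrite eq_sym add1n in le_a *.
Qed.

Section WeightedDegree.
Variables (n : nat) (w : 'I_n -> nat).

Definition mnm_wdeg (m : 'X_{1..n}) : nat := (\sum_i w i * m i)%N.

Lemma mnm_wdegD m1 m2 : mnm_wdeg (m1 + m2)%MM = (mnm_wdeg m1 + mnm_wdeg m2)%N.
Proof. by rewrite /mnm_wdeg -big_split; apply: eq_bigr => i _; rewrite mnmDE mulnDr. Qed.

Lemma mnm_wdegU i : mnm_wdeg U_(i)%MM = w i.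
Proof.
rewrite /mnm_wdeg (bigD1 i) //= mnm1E eqxx muln1 big1 ?addn0 // => j.
by rewrite mnm1E eq_sym => /negbTE ->; rewrite muln0.
Qed.

Lemma mmap1_polyC_Xn (R : comNzRingType) (a : 'I_n -> R) m :
  mmap1 (fun i => (a i)%:P * 'X^(w i)) m = (mmap1 a m)%:P * 'X^(mnm_wdeg m).
Proof.
rewrite /mmap1 /mnm_wdeg rmorph_prod -prodrXr -big_split /=.
by apply: eq_bigr => i _; rewrite exprMn rmorphXn exprM.
Qed.

End WeightedDegree.

Section DerivationTop.
Variables (R : comNzRingType) (d : R -> R).
Hypothesis derD : {morph d : x y / x + y}.
Hypothesis derM : forall x y, d (x * y) = d x * y + x * d y.

Lemma der0 : d 0 = 0.
Proof. by have := derD 0 0; rewrite addr0 => h; apply: (addrI (d 0)); rewrite addr0 -h. Qed.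

Lemma der1 : d 1 = 0.
Proof.
by have := derM 1 1; rewrite !(mulr1, mul1r) => h; apply: (addrI (d 1)); rewrite addr0 -h.
Qed.

Lemma der_natr j : d j%:R = 0.
Proof. by elim: j => [|j IH]; rewrite ?der0 // -addn1 natrD derD der1 IH addr0. Qed.

Lemma der_mul_ker a b : d a = 0 -> d b = 0 -> d (a * b) = 0.
Proof. by move=> Da Db; rewrite derM Da Db mul0r mulr0 addr0. Qed.

Lemma der_exp_ker a j : d a = 0 -> d (a ^+ j) = 0.
Proof. by move=> Da; elim: j => [|j IH]; rewrite ?der1 // exprS der_mul_ker. Qed.

Lemma derB : {morph d : x y / x - y}.
Proof. by move=> x y; apply: (addIr (d y)); rewrite -derD !subrK. Qed.

Lemma iter_derD j : {morph iter j d : x y / x + y}.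
Proof. by elim: j => [|j IH] x y //=; rewrite IH derD. Qed.

Lemma iter_der0 j : iter j d 0 = 0.
Proof. by elim: j => //= j ->; rewrite der0. Qed.

Lemma iter_der_sum j (I : Type) (r : seq I) (P : pred I) (F : I -> R) :
  iter j d (\sum_(i <- r | P i) F i) = \sum_(i <- r | P i) iter j d (F i).
Proof. exact: (big_morph _ (iter_derD j) (iter_der0 j)). Qed.

Lemma iter_der_mull j a f : d a = 0 -> iter j d (a * f) = a * iter j d f.
Proof. by move=> Da; elim: j => //= j ->; rewrite derM Da mul0r add0r. Qed.

Definition der_top (f : R) (j : nat) (a : R) := iter j d f = a /\ d a = 0.

Lemma der_top_ker a : d a = 0 -> der_top a 0 a.
Proof. by []. Qed.

Lemma der_top_vanish f j a N : der_top f j a -> (j < N)%N -> iter N d f = 0.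
Proof.
by move=> [Df Da] ltjN; rewrite -(subnK ltjN) iterD iterS Df Da iter_der0.
Qed.

Lemma der_topM f g i j a b : der_top f i a -> der_top g j b ->
  der_top (f * g) (i + j) ('C(i + j, i)%:R * a * b).
Proof.
have ker_ab a' b' c : d a' = 0 -> d b' = 0 -> d (c%:R * a' * b') = 0.
  by move=> Da Db; rewrite !der_mul_ker ?der_natr.
elim: i j f g a b => [|i IHi] j f g a b [Df Da] [Dg Db].
  move: Df => /= ->; rewrite add0n bin0 mul1r.
  by split; [rewrite iter_der_mull // Dg | exact: der_mul_ker].
elim: j g b Dg Db => [|j IHj] g b Dg Db.
  move: Dg => /= ->; rewrite addn0 binn mul1r.
  by split; [rewrite mulrC iter_der_mull // Df mulrC | exact: der_mul_ker].
have Ddf : iter i d (d f) = a by rewrite -iterSr.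
have Ddg : iter j d (d g) = b by rewrite -iterSr.
have [Ddfg _] := IHi j.+1 (d f) g a b (conj Ddf Da) (conj Dg Db).
have [Dfdg _] := IHj (d g) b Ddg Db.
rewrite addSnnS in Dfdg; split; last exact: ker_ab.
rewrite addSn binS natrD !mulrDl iterSr derM iter_derD Ddfg Dfdg.
exact: addrC.
Qed.

Lemma der_topX f a j : der_top f 1 a -> der_top (f ^+ j) j (j`!%:R * a ^+ j).
Proof.
move=> top_f; elim: j => [|j IH]; first by split; rewrite ?mul1r ?der1.
have top_fj1 := der_topM IH top_f; rewrite addn1 in top_fj1.
rewrite exprSr; congr (der_top _ _ _): top_fj1.
by rewrite binSn factS natrM exprSr; ring.
Qed.

Lemma der_topM_fact f g i j a b : der_top f i (i`!%:R * a) -> der_top g j (j`!%:R * b) ->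
  der_top (f * g) (i + j) ((i + j)`!%:R * (a * b)).
Proof.
move=> top_f top_g; congr (der_top _ _ _): (der_topM top_f top_g).
by rewrite -(bin_fact (leq_addr j i)) addKn !natrM; ring.
Qed.

End DerivationTop.

Section PolyTop.
Variable R : idomainType.

Definition poly_top (q : {poly R}) (j : nat) (c : R) := size q = j.+1 /\ lead_coef q = c.

Lemma poly_top_CXn c j : c != 0 -> poly_top (c%:P * 'X^j) j c.
Proof.
move=> c_neq0; rewrite /poly_top mul_polyC size_scale // size_polyXn.
by rewrite lead_coefZ lead_coefXn mulr1.
Qed.

Lemma poly_top1 : poly_top 1 0 1.
Proof. by rewrite /poly_top size_poly1 lead_coef1. Qed.

Lemma poly_topM (q1 q2 : {poly R}) i j c1 c2 :
  poly_top q1 i c1 -> poly_top q2 j c2 -> poly_top (q1 * q2) (i + j) (c1 * c2).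
Proof.
move=> [s1 l1] [s2 l2]; split; last by rewrite lead_coefM l1 l2.
by rewrite size_mul -?size_poly_eq0 ?s1 ?s2 // addSn addnS.
Qed.

Lemma poly_topX (q : {poly R}) j c e : poly_top q j c -> poly_top (q ^+ e) (j * e) (c ^+ e).
Proof.
move=> top_q; elim: e => [|e IH]; first by rewrite muln0; exact: poly_top1.
by rewrite !exprSr mulnS addnC; apply: poly_topM.
Qed.

Lemma poly_topD (q1 q2 : {poly R}) j c :
  poly_top q1 j c -> (size q2 <= j)%N -> poly_top (q1 + q2) j c.
Proof.
move=> [s1 l1] small_q2; have lt21 : (size q2 < size q1)%N by rewrite s1 ltnS.
by split; rewrite ?size_polyDl ?lead_coefDl.
Qed.

Lemma poly_top_coef (q : {poly R}) j c i :
  poly_top q j c -> (j <= i)%N -> q`_i = (j == i)%:R * c.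
Proof.
move=> [s l] le_ji; have [<-|ne] := eqVneq j i; first by rewrite mul1r -l lead_coefE s.
by rewrite mul0r nth_default // s; lia.
Qed.

End PolyTop.



Local Notation "m # i" := (m (@inord 8 i)) (at level 2).

Section ReesMap.
Variable k : fieldType.
Local Notation A := {mpoly k[5]}.
Local Notation S := {mpoly k[9]}.
Local Notation D := (@Dder k).
Local Notation Au := (Au k). Local Notation Av := (Av k). Local Notation Ax := (Ax k).
Local Notation Ay := (Ay k). Local Notation Az := (Az k). Local Notation Aw := (Aw k).

Lemma DderD : {morph D : p q / p + q}.
Proof.
move=> p q; rewrite /Dder !mderivD.
move: (mderiv _ p) (mderiv _ p) (mderiv _ p) (mderiv _ q) (mderiv _ q) (mderiv _ q).
by move=> a b c d e f; ring.
Qed.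

Lemma DderM p q : D (p * q) = D p * q + p * D q.
Proof.
rewrite /Dder !mderivM.
move: (mderiv _ p) (mderiv _ p) (mderiv _ p) (mderiv _ q) (mderiv _ q) (mderiv _ q).
by move: Au Av Aw => U V W a b c d e f; ring.
Qed.

Lemma Dder_var i : (i < 5)%N ->
  D (Avar k i) = (i == 2)%:R * Au + (i == 3)%:R * Av + (i == 4)%:R * (1 + Aw).
Proof. by move=> lti; rewrite /Dder /Avar !mderivX1 !eq_inord // !(mulrC _%:R). Qed.

Lemma DAu : D Au = 0. Proof. by rewrite Dder_var // !mul0r !addr0. Qed.
Lemma DAv : D Av = 0. Proof. by rewrite Dder_var // !mul0r !addr0. Qed.
Lemma DAx : D Ax = Au. Proof. by rewrite Dder_var // !mul0r mul1r !addr0. Qed.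
Lemma DAy : D Ay = Av. Proof. by rewrite Dder_var // !mul0r mul1r add0r addr0. Qed.
Lemma DAz : D Az = 1 + Aw. Proof. by rewrite Dder_var // !mul0r mul1r !add0r. Qed.

Lemma DAw : D Aw = 0.
Proof. by rewrite /Aw (derB DderD) !DderM DAu DAv DAx DAy; ring. Qed.

Definition Ac1 : A := (1 + Aw) * Ax - Au * Az.
Definition Ac2 : A := (1 + Aw) * Ay - Av * Az.

Lemma DAc1 : D Ac1 = 0.
Proof.
by rewrite /Ac1 (derB DderD) !DderM DderD (der1 DderM) DAu DAw DAx DAz; ring.
Qed.

Lemma DAc2 : D Ac2 = 0.
Proof.
by rewrite /Ac2 (derB DderD) !DderM DderD (der1 DderM) DAv DAw DAy DAz; ring.
Qed.

Definition coef_var (i : 'I_9) : A := nth 1 [:: Au; Av; Ax; Ay; Az; Aw; Ac1; Ac2] i.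
Definition ups_deg (i : 'I_9) : nat := nth 0%N [:: 0; 0; 1; 1; 1; 0; 0; 0; 1]%N i.

Definition rees_map : {rmorphism S -> {poly A}} :=
  mmap (polyC \o @mpolyC 5 k) (fun i => (coef_var i)%:P * 'X^(ups_deg i)).

Definition mon_coef (m : 'X_{1..9}) : A := mmap1 coef_var m.

Lemma sweight_wdeg m : sweight m = mnm_wdeg ups_deg m.
Proof.
by rewrite /sweight /mnm_wdeg big_ord_iota /= !big_cons big_nil /ups_deg !inordK //=; lia.
Qed.

Lemma rees_mapC c : rees_map c%:MP = (c%:MP)%:P.
Proof. exact: mmapC. Qed.

Lemma rees_mapX m : rees_map 'X_[m] = (mon_coef m)%:P * 'X^(sweight m).
Proof. by rewrite [LHS]mmapX mmap1_polyC_Xn sweight_wdeg. Qed.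

Lemma rees_map_Svar i : (i < 9)%N ->
  rees_map (Svar k i) = (coef_var (inord i))%:P * 'X^(ups_deg (inord i)).
Proof. by move=> lti; rewrite [LHS]mmapX mmap1U. Qed.

Lemma polyC_Aw : Aw%:P = Ax%:P * Av%:P - Ay%:P * Au%:P.
Proof. by rewrite polyCB !polyCM. Qed.

Lemma polyC_Ac1 : Ac1%:P = (1 + Aw%:P) * Ax%:P - Au%:P * Az%:P.
Proof. by rewrite polyCB !polyCM polyCD. Qed.

Lemma polyC_Ac2 : Ac2%:P = (1 + Aw%:P) * Ay%:P - Av%:P * Az%:P.
Proof. by rewrite polyCB !polyCM polyCD. Qed.

Lemma rees_map_Igen j : rees_map (Igen k j) = 0.
Proof.
case: j => [[|[|[|[|[|//]]]]] ltj5]; rewrite /Igen /=;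
  rewrite !(rmorphB, rmorphD, rmorphM, rmorph1) !rees_map_Svar //;
  rewrite /coef_var /ups_deg !inordK //= ?polyC_Ac1 ?polyC_Ac2 polyC_Aw;
  move: Au%:P Av%:P Ax%:P Ay%:P Az%:P ('X : {poly A}) => U V X Y Z T; ring.
Qed.

Lemma DderC c : D c%:MP = 0.
Proof. by rewrite /Dder !mderivC !mulr0 !addr0. Qed.

Definition xyz_deg (m : 'X_{1..9}) : nat := (m#2 + m#3 + m#4)%N.

Definition mon_top (m : 'X_{1..9}) : A :=
  Au ^+ (m#0 + m#2) * Av ^+ (m#1 + m#3) * (1 + Aw) ^+ m#4 * Aw ^+ m#5
  * Ac1 ^+ m#6 * Ac2 ^+ m#7.

Lemma mon_coefE m : mon_coef m =
  Au ^+ m#0 * Av ^+ m#1 * Ax ^+ m#2 * Ay ^+ m#3 * Az ^+ m#4 * Aw ^+ m#5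
  * Ac1 ^+ m#6 * Ac2 ^+ m#7.
Proof.
rewrite /mon_coef /mmap1 big_ord_iota /= !big_cons big_nil /coef_var !inordK //=.
rewrite expr1n; move: (Au ^+ _) (Av ^+ _) (Ax ^+ _) (Ay ^+ _) (Az ^+ _) (Aw ^+ _).
by move: (Ac1 ^+ _) (Ac2 ^+ _) => a6 a7 a0 a1 a2 a3 a4 a5; ring.
Qed.

Lemma der_top_mon_coef m : der_top D (mon_coef m) (xyz_deg m) ((xyz_deg m)`!%:R * mon_top m).
Proof.
have der_top_x := der_topX DderD DderM (m#2) (conj DAx DAu : der_top D Ax 1 Au).
have der_top_y := der_topX DderD DderM (m#3) (conj DAy DAv : der_top D Ay 1 Av).
have D1w : D (1 + Aw) = 0 by rewrite DderD (der1 DderM) DAw addr0.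
have der_top_z := der_topX DderD DderM (m#4) (conj DAz D1w : der_top D Az 1 (1 + Aw)).
have der_top_xy := der_topM_fact DderD DderM der_top_x der_top_y.
have der_top_xyz := der_topM_fact DderD DderM der_top_xy der_top_z.
pose K := Au ^+ m#0 * Av ^+ m#1 * Aw ^+ m#5 * Ac1 ^+ m#6 * Ac2 ^+ m#7.
have DK : D K = 0.
  by rewrite /K !(der_mul_ker DderM) // (der_exp_ker DderM) ?DAu ?DAv ?DAw ?DAc1 ?DAc2.
congr (der_top _ _ _ _): (der_topM DderD DderM (der_top_ker DK) der_top_xyz).
- by rewrite mon_coefE /K; ring.
- by rewrite /mon_top /K bin0 !exprD; ring.
Qed.

Lemma rees_mapZX c m : rees_map (c *: 'X_[m]) = (c *: mon_coef m) *: 'X^(sweight m).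
Proof.
by rewrite -mul_mpolyC rmorphM rees_mapC rees_mapX mulrA -polyCM mul_polyC mul_mpolyC.
Qed.

Lemma rees_map_coef p n :
  (rees_map p)`_n = \sum_(m <- msupp p | sweight m == n) p@_m *: mon_coef m.
Proof.
rewrite {1}(mpolyE p) rmorph_sum (eq_bigr _ (fun m _ => rees_mapZX _ m)).
exact: coef_sumMXn.
Qed.

Lemma iter_Dder_scale j c f : iter j D (c *: f) = c *: iter j D f.
Proof. by rewrite -!mul_mpolyC (iter_der_mull DderM _ _ (DderC c)). Qed.

Lemma rees_map_in_rees p : in_rees (rees_map p).
Proof.
move=> n; rewrite rees_map_coef (iter_der_sum DderD) big1 // => m /eqP sw_m.
rewrite iter_Dder_scale (der_top_vanish DderD (der_top_mon_coef m)) ?scaler0 //.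
by rewrite ltnS -sw_m /xyz_deg /sweight leq_addr.
Qed.

End ReesMap.


Section StandardForm.
Variable k : fieldType.
Local Notation S := {mpoly k[9]}.

Lemma in_I0 : in_I (0 : S).
Proof. by exists (fun=> 0); rewrite big1 // => i _; rewrite mul0r. Qed.

Lemma in_ID (p q : S) : in_I p -> in_I q -> in_I (p + q).
Proof.
move=> [a ->] [b ->]; exists (fun i => a i + b i).
by rewrite -big_split; apply: eq_bigr => i _; rewrite mulrDl.
Qed.

Lemma in_I_mull (c p : S) : in_I p -> in_I (c * p).
Proof.
move=> [a ->]; exists (fun i => c * a i).
by rewrite mulr_sumr; apply: eq_bigr => i _; rewrite mulrA.
Qed.

Lemma in_I_Igen_eq (p c : S) j : p = c * Igen k j -> in_I p.
Proof.
move=> ->; apply: in_I_mull; exists (fun i => (i == j)%:R).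
rewrite (bigD1 j) //= eqxx mul1r big1 ?addr0 // => i /negbTE ->.
by rewrite mul0r.
Qed.

(* No leading monomial w^2, zw, vx, vz, uz of the generators divides [m]. *)
Definition std (m : 'X_{1..9}) : bool :=
  [&& (m#5 < 2)%N, (m#4 == 0%N) || (m#5 == 0%N), (m#1 == 0%N) || (m#2 == 0%N),
      (m#1 == 0%N) || (m#4 == 0%N) & (m#0 == 0%N) || (m#4 == 0%N)].

Definition evar (i : nat) : 'X_{1..9} := U_(@inord 8 i)%MM.

Definition lead_mnm (j : nat) : 'X_{1..9} := nth 0%MM
  [:: evar 5 + evar 5; evar 4 + evar 5; evar 1 + evar 2; evar 1 + evar 4;
      evar 0 + evar 4]%MM j.

Definition rule_rhs (j : nat) : seq (k * 'X_{1..9}) := nth [::]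
  [:: [:: (1, evar 1 + evar 6); (-1, evar 0 + evar 7); (-1, evar 5)];
      [:: (1, evar 3 + evar 6); (-1, evar 2 + evar 7)];
      [:: (1, evar 5 + evar 8); (1, evar 0 + evar 3)];
      [:: (1, evar 3); (1, evar 3 + evar 5); (-1, evar 7 + evar 8)];
      [:: (1, evar 2); (1, evar 2 + evar 5); (-1, evar 6 + evar 8)]]%MM j.

Definition rule_poly (j : nat) : S := \sum_(t <- rule_rhs j) t.1 *: 'X_[t.2].

Lemma rule_in_I (j : 'I_5) : in_I ('X_[lead_mnm j] - rule_poly j).
Proof.
case: j => [[|[|[|[|[|//]]]]] ltj5];
  rewrite /rule_poly /= !big_cons big_nil !mpolyXD ?scale1r ?scaleN1r;
  [ apply: (@in_I_Igen_eq _ (-1) (Ordinal ltj5))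
  | apply: (@in_I_Igen_eq _ 1 (Ordinal ltj5))
  | apply: (@in_I_Igen_eq _ (-1) (Ordinal ltj5))
  | apply: (@in_I_Igen_eq _ 1 (Ordinal ltj5))
  | apply: (@in_I_Igen_eq _ 1 (Ordinal ltj5)) ];
  rewrite /Igen /= /Su /Sv /Sx /Sy /Sz /Sw /Sc1 /Sc2 /Sups /Svar /evar; ring.
Qed.

(* Chosen so that every rewrite rule lowers [rho]. *)
Definition rho_wt (i : 'I_9) : nat := nth 0%N [:: 1; 1; 2; 1; 3; 1; 0; 0; 0]%N i.
Local Notation rho := (mnm_wdeg rho_wt).

Lemma rule_rhs_lt (j : 'I_5) :
  all (fun t => rho t.2 < rho (lead_mnm j))%N (rule_rhs j).
Proof.
by case: j => [[|[|[|[|[|//]]]]] ltj5]; rewrite /= /evar !mnm_wdegD !mnm_wdegU /rho_wt !inordK.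
Qed.

Lemma nonstd_lead m : ~~ std m -> exists j : 'I_5, (lead_mnm j <= m)%MM.
Proof.
rewrite /std => nstd_m.
have : (1 < m#5)%N \/ (0 < m#4)%N /\ (0 < m#5)%N \/ (0 < m#1)%N /\ (0 < m#2)%N
    \/ (0 < m#1)%N /\ (0 < m#4)%N \/ (0 < m#0)%N /\ (0 < m#4)%N by lia.
case=> [? | [[? ?] | [[? ?] | [[? ?] | [? ?]]]]];
  [exists (@Ordinal 5 0 isT) | exists (@Ordinal 5 1 isT) | exists (@Ordinal 5 2 isT)
  | exists (@Ordinal 5 3 isT) | exists (@Ordinal 5 4 isT)];
  by apply: lepm_UU; rewrite ?eq_inord //; lia.
Qed.

Definition std_reducible (p : S) := exists2 r : S, all std (msupp r) & in_I (p - r).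

Lemma std_reducible_in_I p : in_I p -> std_reducible p.
Proof. by exists 0; rewrite ?msupp0 ?subr0. Qed.

Lemma std_reducible_std m : std m -> std_reducible 'X_[m].
Proof. by exists 'X_[m]; rewrite ?msuppX /= ?andbT ?subrr //; apply: in_I0. Qed.

Lemma std_reducibleD p q : std_reducible p -> std_reducible q -> std_reducible (p + q).
Proof.
move=> [r1 std1 I1] [r2 std2 I2]; exists (r1 + r2).
  apply/allP => m /msuppD_le; rewrite mem_cat.
  by case/orP; [apply: (allP std1) | apply: (allP std2)].
by rewrite opprD addrACA; apply: in_ID.
Qed.

Lemma std_reducibleZ c p : std_reducible p -> std_reducible (c *: p).
Proof.
move=> [r std_r I_r]; exists (c *: r).
  by apply/allP => m /msuppZ_le; apply: (allP std_r).
by rewrite -scalerBr -mul_mpolyC; apply: in_I_mull.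
Qed.

Lemma std_reducible_rule (j : 'I_5) m :
  (forall t, (rho t < rho (m + lead_mnm j))%N -> std_reducible 'X_[t]) ->
  std_reducible 'X_[m + lead_mnm j].
Proof.
move=> IH; have rule_mull : 'X_[m] * rule_poly j = \sum_(t <- rule_rhs j) t.1 *: 'X_[m + t.2].
  by rewrite /rule_poly mulr_sumr; apply: eq_bigr => t _; rewrite mpolyXD scalerAr.
rewrite mpolyXD -[X in std_reducible X](subrK ('X_[m] * rule_poly j)) -mulrBr rule_mull.
apply: std_reducibleD; first exact/std_reducible_in_I/in_I_mull/rule_in_I.
rewrite big_seq; apply: (big_ind std_reducible) => //.
- exact/std_reducible_in_I/in_I0.
- exact: std_reducibleD.
move=> t t_in; apply/std_reducibleZ/IH.
by rewrite !mnm_wdegD ltn_add2l; apply: (allP (rule_rhs_lt j)).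
Qed.

Lemma std_reducibleX m : std_reducible 'X_[m].
Proof.
have [N lt_mN] := ubnP (rho m); elim: N m lt_mN => // N IH m lt_mN.
have [|/nonstd_lead [j le_jm]] := boolP (std m); first exact: std_reducible_std.
rewrite -(submK le_jm); apply: std_reducible_rule => t; rewrite submK // => lt_tm.
by apply: IH; apply: leq_trans lt_tm _.
Qed.

Lemma std_reducible_all p : std_reducible p.
Proof.
rewrite (mpolyE p); apply: (big_ind std_reducible).
- exact/std_reducible_in_I/in_I0.
- exact: std_reducibleD.
by move=> m _; apply/std_reducibleZ/std_reducibleX.
Qed.

End StandardForm.

Section Independence.
Variable k : fieldType.
Local Notation A := {mpoly k[5]}.
Local Notation Au := (Au k). Local Notation Av := (Av k). Local Notation Ax := (Ax k).
Local Notation Ay := (Ay k). Local Notation Az := (Az k). Local Notation Aw := (Aw k).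

Definition grade_wt (i : 'I_5) : nat := nth 0%N [:: 1; 2; 3; 2; 1]%N i.

(* Grading with deg u = deg z = 1, deg v = deg y = 2, deg x = 3, recorded by the
   power of 'X: the top coefficient of [grade q] is the leading form of [q]. *)
Definition grade : {rmorphism A -> {poly A}} :=
  mmap (polyC \o @mpolyC 5 k) (fun i => ('X_i)%:P * 'X^(grade_wt i)).

Lemma grade_Avar i : (i < 5)%N ->
  grade (Avar k i) = (Avar k i)%:P * 'X^(nth 0%N [:: 1; 2; 3; 2; 1]%N i).
Proof. by move=> lti; rewrite [LHS]mmapX mmap1U /grade_wt inordK. Qed.

Lemma grade_scale c q : grade (c *: q) = c%:MP *: grade q.
Proof. by rewrite -mul_mpolyC rmorphM [grade _]mmapC mul_polyC. Qed.

Lemma poly_top_Avar i : (i < 5)%N ->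
  poly_top (grade (Avar k i)) (nth 0%N [:: 1; 2; 3; 2; 1]%N i) (Avar k i).
Proof.
move=> lti; rewrite grade_Avar //; apply: poly_top_CXn; apply/eqP.
by move/(congr1 (mcoeff U_(@inord 4 i))); rewrite mcoeffX eqxx mcoeff0; apply/eqP/oner_neq0.
Qed.

Lemma poly_top_Aw : poly_top (grade Aw) 5 (Ax * Av).
Proof.
rewrite /Aw rmorphB !rmorphM; apply: poly_topD; rewrite ?size_polyN.
  exact: (poly_topM (poly_top_Avar (isT : 2 < 5)%N) (poly_top_Avar (isT : 1 < 5)%N)).
by have [-> _] := poly_topM (poly_top_Avar (isT : 3 < 5)%N) (poly_top_Avar (isT : 0 < 5)%N).
Qed.

Lemma poly_top_1Aw : poly_top (grade (1 + Aw)) 5 (Ax * Av).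
Proof.
by rewrite rmorphD rmorph1 addrC; apply: poly_topD poly_top_Aw _; rewrite size_poly1.
Qed.

Lemma poly_top_Ac1 : poly_top (grade (Ac1 k)) 8 (Ax * Av * Ax).
Proof.
rewrite /Ac1 rmorphB !rmorphM; apply: poly_topD; rewrite ?size_polyN.
  exact: (poly_topM poly_top_1Aw (poly_top_Avar (isT : 2 < 5)%N)).
by have [-> _] := poly_topM (poly_top_Avar (isT : 0 < 5)%N) (poly_top_Avar (isT : 4 < 5)%N).
Qed.

Lemma poly_top_Ac2 : poly_top (grade (Ac2 k)) 7 (Ax * Av * Ay).
Proof.
rewrite /Ac2 rmorphB !rmorphM; apply: poly_topD; rewrite ?size_polyN.
  exact: (poly_topM poly_top_1Aw (poly_top_Avar (isT : 3 < 5)%N)).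
by have [-> _] := poly_topM (poly_top_Avar (isT : 1 < 5)%N) (poly_top_Avar (isT : 4 < 5)%N).
Qed.

Definition top_deg (m : 'X_{1..9}) : nat :=
  (m#0 + m#2 + 2 * (m#1 + m#3) + 5 * m#4 + 5 * m#5 + 8 * m#6 + 7 * m#7)%N.

Definition top_mnm (m : 'X_{1..9}) : 'X_{1..5} :=
  (U_(@inord 4 0) *+ (m#0 + m#2) + U_(@inord 4 1) *+ (m#1 + m#3 + m#4 + m#5 + m#6 + m#7)
   + U_(@inord 4 2) *+ (m#4 + m#5 + 2 * m#6 + m#7) + U_(@inord 4 3) *+ m#7)%MM.

Lemma poly_top_mon_top m : poly_top (grade (mon_top k m)) (top_deg m) 'X_[top_mnm m].
Proof.
rewrite /mon_top !rmorphM !rmorphXn.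
have top_u := poly_topX (m#0 + m#2) (poly_top_Avar (isT : 0 < 5)%N).
have top_v := poly_topX (m#1 + m#3) (poly_top_Avar (isT : 1 < 5)%N).
have := poly_topM (poly_topM (poly_topM (poly_topM (poly_topM top_u top_v)
  (poly_topX (m#4) poly_top_1Aw)) (poly_topX (m#5) poly_top_Aw))
  (poly_topX (m#6) poly_top_Ac1)) (poly_topX (m#7) poly_top_Ac2).
congr poly_top; first by rewrite /top_deg /=; lia.
rewrite /top_mnm !mpolyXD -!mpolyXn /Au /Av /Ax /Ay /Avar.
move: ('X_(@inord 4 0) : A) ('X_(@inord 4 1) : A) ('X_(@inord 4 2) : A) ('X_(@inord 4 3) : A).
by move=> U V X Y; rewrite !exprMn !exprD; ring.
Qed.

Lemma top_mnm_inj m1 m2 : std m1 -> std m2 -> sweight m1 = sweight m2 ->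
  xyz_deg m1 = xyz_deg m2 -> top_mnm m1 = top_mnm m2 -> m1 = m2.
Proof.
rewrite /std /sweight /xyz_deg => std1 std2 sw12 dg12 top12.
have e i : (i < 4)%N -> top_mnm m1 (inord i) = top_mnm m2 (inord i) by rewrite top12.
have := e 0%N isT; have := e 1%N isT; have := e 2%N isT; have := e 3%N isT.
rewrite /top_mnm !mnmDE !mulmnE !mnm1E !eq_inord //= => e3 e2 e1 e0.
apply/mnmP => i; rewrite -[i]inord_val; case: i => [[|[|[|[|[|[|[|[|[|//]]]]]]]]] _] /=; lia.
Qed.

Lemma mon_top_free (s : seq 'X_{1..9}) (lam : 'X_{1..9} -> k) N e :
  uniq s -> {in s, forall m, [&& std m, sweight m == N & xyz_deg m == e]} ->
  \sum_(m <- s) lam m *: mon_top k m = 0 -> {in s, forall m, lam m = 0}.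
Proof.
move=> uniq_s s_ok sum0 m ms; apply/eqP; apply: contraT => lam_m.
have m_in : m \in [seq m <- s | lam m != 0] by rewrite mem_filter lam_m.
have [m0 + m0_max] := exists_max_seq top_deg m_in.
rewrite mem_filter => /andP [lam_m0 m0s].
have coef_top m' : m' \in s -> lam m' != 0 ->
    ((grade (mon_top k m'))`_(top_deg m0))@_(top_mnm m0) = (m' == m0)%:R.
  move=> m's lam_m'.
  have le_top : (top_deg m' <= top_deg m0)%N by apply: m0_max; rewrite mem_filter lam_m'.
  rewrite (poly_top_coef (poly_top_mon_top m') le_top) mulr_natl mcoeffMn mcoeffX.
  have [->|ne] := eqVneq m' m0; first by rewrite !eqxx.
  suff /negbTE -> : top_mnm m' != top_mnm m0 by rewrite mul0rn.
  apply: contra ne => /eqP eq_top.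
  have /and3P [std' /eqP sw' /eqP dg'] := s_ok m' m's.
  have /and3P [std0 /eqP sw0 /eqP dg0] := s_ok m0 m0s.
  by apply/eqP/top_mnm_inj; rewrite ?sw' ?sw0 ?dg' ?dg0.
have := congr1 (fun q => ((grade q)`_(top_deg m0))@_(top_mnm m0)) sum0.
rewrite /= rmorph_sum coef_sum raddf_sum rmorph0 coef0 mcoeff0 (bigD1_seq m0) //=.
rewrite big1_seq => [|m' /andP [ne m's]]; last first.
  rewrite grade_scale coefZ mcoeffCM.
  by have [->|/(coef_top _ m's) ->] := eqVneq (lam m') 0; rewrite ?mul0r // (negbTE ne) mulr0.
rewrite grade_scale coefZ mcoeffCM coef_top // eqxx mulr1 addr0 => /eqP.
by rewrite (negbTE lam_m0).
Qed.

End Independence.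

Section ReesAlgebra.
Variable k : fieldType.
Hypothesis char0 : [pchar k] =i pred0.
Local Notation A := {mpoly k[5]}.
Local Notation D := (@Dder k).
Local Notation rees_map := (rees_map k).

Lemma std_comb_iter_eq0 (s : seq 'X_{1..9}) (lam : 'X_{1..9} -> k) N n :
  uniq s -> {in s, forall m, std m && (sweight m == N)} ->
  iter n D (\sum_(m <- s) lam m *: mon_coef k m) = 0 ->
  {in s, forall m, (n <= xyz_deg m)%N -> lam m = 0}.
Proof.
move=> uniq_s s_ok iter0 m ms le_nm; apply/eqP; apply: contraT => lam_m.
have m_in : m \in [seq m <- s | (n <= xyz_deg m)%N && (lam m != 0)].
  by rewrite mem_filter le_nm lam_m.
have [m0 + m0_max] := exists_max_seq xyz_deg m_in.
rewrite mem_filter => /andP [/andP [le_n0 lam_m0] m0s].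
set e := xyz_deg m0 in le_n0 m0_max.
have iter_e : iter e D (\sum_(m <- s) lam m *: mon_coef k m)
    = e`!%:R * \sum_(m <- s | xyz_deg m == e) lam m *: mon_top k m.
  rewrite (iter_der_sum (@DderD k)) mulr_sumr [RHS]big_mkcond /=; apply: eq_big_seq => m' m's.
  rewrite iter_Dder_scale; have [lt_e|] := ltnP (xyz_deg m') e.
    by rewrite (der_top_vanish (@DderD k) (der_top_mon_coef k m') lt_e) scaler0 ltn_eqF ?mulr0.
  rewrite leq_eqVlt eq_sym => /orP [/eqP eq_e | lt_e].
    by rewrite -eq_e; have [-> _] := der_top_mon_coef k m'; rewrite eqxx scalerAr.
  suff -> : lam m' = 0 by rewrite scale0r gtn_eqF ?mulr0.
  apply/eqP; apply: contraT => lam_m'; suff : (xyz_deg m' <= e)%N by rewrite leqNgt lt_e.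
  by apply: m0_max; rewrite mem_filter lam_m' m's (leq_trans le_n0 (ltnW lt_e)).
have fact_neq0 : (e`!%:R : A) != 0.
  by rewrite -mpolyC_nat mpolyC_eq0 ((pcharf0P k).1 char0) -lt0n fact_gt0.
have /eqP : iter e D (\sum_(m <- s) lam m *: mon_coef k m) = 0.
  by rewrite -(subnK le_n0) iterD iter0 (iter_der0 (@DderD k)).
rewrite iter_e mulf_eq0 (negbTE fact_neq0) /= -big_filter => /eqP top0.
suff : lam m0 = 0 by move/eqP; rewrite (negbTE lam_m0).
apply: (mon_top_free (N := N) (e := e) (filter_uniq _ uniq_s) _ top0).
  by move=> m'; rewrite mem_filter => /andP [-> /s_ok /andP [-> ->]].
by rewrite mem_filter m0s eqxx.
Qed.

Lemma rees_map_in_I p : in_I p -> rees_map p = 0.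
Proof.
by case=> q ->; rewrite rmorph_sum big1 // => i _; rewrite rmorphM rees_map_Igen mulr0.
Qed.

Lemma rees_map_std_eq0 r : all std (msupp r) -> rees_map r = 0 -> r = 0.
Proof.
move=> std_r r0; rewrite (mpolyE r) big1_seq // => m /andP [_ mr].
suff -> : r@_m = 0 by rewrite scale0r.
pose s := [seq m' <- msupp r | sweight m' == sweight m].
apply: (std_comb_iter_eq0 (s := s) (lam := fun m' => r@_m') (N := sweight m) (n := 0)) => //.
- exact/filter_uniq/msupp_uniq.
- by move=> m'; rewrite mem_filter => /andP [-> /(allP std_r) ->].
- by rewrite /= big_filter -rees_map_coef r0 coef0.
by rewrite mem_filter eqxx.
Qed.

Lemma rees_map_kernel p : rees_map p = 0 -> in_I p.
Proof.
move=> p0; have [r std_r I_pr] := std_reducible_all p.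
suff r0 : r = 0 by rewrite r0 subr0 in I_pr.
apply: (rees_map_std_eq0 std_r); apply/eqP; rewrite -oppr_eq0.
by have := rees_map_in_I I_pr; rewrite rmorphB p0 sub0r => ->.
Qed.

Definition xyz5 (m5 : 'X_{1..5}) : nat :=
  (m5 (@inord 4 2) + m5 (@inord 4 3) + m5 (@inord 4 4))%N.

Definition rees_lift (m5 : 'X_{1..5}) (N : nat) : 'X_{1..9} :=
  [multinom (if (i < 5)%N then m5 (inord i) else if i == 8 :> nat then N - xyz5 m5 else 0)%N
  | i < 9].

Lemma rees_liftE m5 N i : (i < 9)%N -> (rees_lift m5 N)#i =
  (if (i < 5)%N then m5 (inord i) else if i == 8 then N - xyz5 m5 else 0)%N.
Proof. by move=> lti; rewrite /rees_lift mnmE inordK. Qed.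

Lemma mon_coef_rees_lift m5 N : mon_coef k (rees_lift m5 N) = 'X_[m5].
Proof.
rewrite mon_coefE !rees_liftE //= !expr0 !mulr1 mpolyXE_id big_ord_iota /= !big_cons big_nil.
rewrite /Au /Av /Ax /Ay /Az /Avar; move: ('X_(@inord 4 0) ^+ _) ('X_(@inord 4 1) ^+ _).
move: ('X_(@inord 4 2) ^+ _) ('X_(@inord 4 3) ^+ _) ('X_(@inord 4 4) ^+ _).
by move=> ? ? ? ? ?; ring.
Qed.

Lemma sweight_rees_lift m5 N : (xyz5 m5 <= N)%N -> sweight (rees_lift m5 N) = N.
Proof. by move=> le_N; rewrite /sweight !rees_liftE //=; move: le_N; rewrite /xyz5; lia. Qed.

Lemma xyz5_le_mdeg m5 : (xyz5 m5 <= mdeg m5)%N.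
Proof. by rewrite /xyz5 mdegE big_ord_iota /= !big_cons big_nil; lia. Qed.

Lemma rees_map_Xn f N : (msize f <= N)%N ->
  rees_map (\sum_(m5 <- msupp f) f@_m5 *: 'X_[rees_lift m5 N]) = f *: 'X^N.
Proof.
move=> le_fN; rewrite rmorph_sum [in RHS](mpolyE f) scaler_suml.
apply: eq_big_seq => m5 m5f; rewrite rees_mapZX mon_coef_rees_lift sweight_rees_lift //.
by rewrite (leq_trans (xyz5_le_mdeg m5)) // (leq_trans _ le_fN) // ltnW // msize_mdeg_lt.
Qed.

Lemma mon_coef_lower m j : mon_coef k (m - evar 8 *+ j)%MM = mon_coef k m.
Proof. by rewrite !mon_coefE !mnmBE !mulmnE /evar !mnm1E !eq_inord //= !mul0n !subn0. Qed.

Lemma rees_map_lower c m n : (xyz_deg m <= n <= sweight m)%N ->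
  rees_map (c *: 'X_[m - evar 8 *+ (sweight m - n)]) = (c *: mon_coef k m) *: 'X^n.
Proof.
move=> /andP [le_dn le_nw]; rewrite rees_mapZX mon_coef_lower; congr (_ *: 'X^_).
by move: le_dn le_nw; rewrite /sweight /xyz_deg !mnmBE !mulmnE /evar !mnm1E !eq_inord //=; lia.
Qed.

Lemma rees_map_piece n f : iter n.+1 D f = 0 -> exists p, rees_map p = f%:P * 'X^n.
Proof.
move=> Df0; pose N := maxn (msize f) n.
have [r std_r I_qr] := std_reducible_all (\sum_(m5 <- msupp f) f@_m5 *: 'X_[rees_lift m5 N]).
have im_r : rees_map r = f *: 'X^N.
  apply/eqP; rewrite eq_sym -subr_eq0 -(rees_map_Xn (leq_maxl _ _)) -rmorphB.
  exact/eqP/rees_map_in_I.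
pose s := [seq m <- msupp r | sweight m == N].
have sum_f : \sum_(m <- s) r@_m *: mon_coef k m = f.
  by rewrite big_filter -rees_map_coef im_r coefZ coefXn eqxx mulr1.
have small : {in s, forall m, (n.+1 <= xyz_deg m)%N -> r@_m = 0}.
  apply: (std_comb_iter_eq0 (N := N) (filter_uniq _ (msupp_uniq r))) => [m|].
    by rewrite mem_filter => /andP [-> /(allP std_r) ->].
  by rewrite sum_f.
exists (\sum_(m <- s) r@_m *: 'X_[m - evar 8 *+ (N - n)]).
rewrite rmorph_sum mul_polyC -[in RHS]sum_f scaler_suml; apply: eq_big_seq => m ms.
have [-> | r_m] := eqVneq r@_m 0; first by rewrite !scale0r rmorph0.
move: (ms); rewrite mem_filter => /andP [/eqP sw_m _]; rewrite -sw_m rees_map_lower //.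
rewrite sw_m leq_maxr andbT leqNgt; apply: contra r_m => /(small m ms) ->.
exact: eqxx.
Qed.

Lemma rees_map_onto P : in_rees P -> exists p, rees_map p = P.
Proof.
move=> reesP; suff [p im_p] : exists p, rees_map p = \sum_(i < size P) (P`_i)%:P * 'X^i.
  by exists p; rewrite im_p -[RHS]coefK poly_def; apply: eq_bigr => i _; rewrite mul_polyC.
elim: (size P) => [|j [p im_p]]; first by exists 0; rewrite rmorph0 big_ord0.
have [q im_q] := rees_map_piece (reesP j).
by exists (p + q); rewrite rmorphD im_p im_q big_ord_recr.
Qed.

End ReesAlgebra.

Theorem lemma3p3 (k : closedFieldType) (hk : [pchar k] =i pred0) :
  exists phi : {rmorphism {mpoly k[9]} -> {poly {mpoly k[5]}}},
    [/\ forall c : k, phi c%:MP = (c%:MP)%:P,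
        forall m : 'X_{1..9}, exists a : {mpoly k[5]},
          phi 'X_[m] = a%:P * 'X^(sweight m),
        forall P : {poly {mpoly k[5]}},
          in_rees P <-> exists p, phi p = P
      & forall p : {mpoly k[9]}, phi p = 0 <-> in_I p].
Proof.
exists (rees_map k); split.
- exact: rees_mapC.
- by move=> m; exists (mon_coef k m); apply: rees_mapX.
- by move=> P; split; [apply: (rees_map_onto hk) | case=> p <-; apply: rees_map_in_rees].
- by move=> p; split; [apply: (rees_map_kernel hk) | apply: rees_map_in_I].
Qed.
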